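(* Let $\eta(v,w)=v^0w^0-v^1w^1-\dots-v^nw^n$ on $\mathbb{R}^{n+1}$ and let $h$ be a symmetric bilinear form on $\mathbb{R}^{n+1}$ of Lorentzian signature $(+,-,\dots,-)$. Let $C_h$ be one of the two connected components of $\{v: h(v,v)>0\}$ and set $$\mathcal{T}=\{v\in\mathbb{R}^{n+1}: \eta(v,v)>0,\ v^0>0\}\cap C_h,$$ assumed nonempty. Define $F:\mathcal{T}\to(0,\infty)$ by $F(v)=[\eta(v,v)\,h(v,v)]^{1/4}$. Then for all $v,w\in\mathcal{T}$, $$\frac12\left(\frac{\eta(w,v)}{\eta(v,v)}+\frac{h(w,v)}{h(v,v)}\right)\ge\frac{F(w)}{F(v)}.$$ *)

From HB Require Import structures.
From mathcomp Require Import all_boot all_order all_algebra.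
From mathcomp Require Import all_classical all_reals all_analysis.
Set Implicit Arguments. Unset Strict Implicit. Unset Printing Implicit Defensive.
Import Order.TTheory GRing.Theory Num.Theory.
Import numFieldNormedType.Exports.
Local Open Scope ring_scope.
Local Open Scope classical_set_scope.

Definition bform (R : realType) (n : nat) (A : 'M[R]_n) (v w : 'rV[R]_n) : R :=
  (v *m A *m w^T) 0 0.

Definition etaM (R : realType) (n : nat) : 'M[R]_n.+1 :=
  diag_mx (\row_(i < n.+1) if i == ord0 then 1 else -1).

Definition etaL (R : realType) (n : nat) (v w : 'rV[R]_n.+1) : R :=
  bform (etaM R n) v w.

(* H is symmetric of Lorentzian signature (+,-,...,-):
   congruent (Sylvester) to diag(1,-1,...,-1) *)
Definition lorentzian (R : realType) (n : nat) (H : 'M[R]_n.+1) : Prop :=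
  H^T = H /\ exists P : 'M[R]_n.+1, P \in unitmx /\ H = P^T *m etaM R n *m P.

Definition Tset (R : realType) (n : nat) (C : set 'rV[R]_n.+1) : set 'rV[R]_n.+1 :=
  [set v | 0 < etaL v v /\ 0 < v 0 ord0] `&` C.

Definition Ffun (R : realType) (n : nat) (H : 'M[R]_n.+1) (v : 'rV[R]_n.+1) : R :=
  (etaL v v * bform H v v) `^ (4%:R^-1).

From HB Require Import structures.
From mathcomp Require Import all_boot all_order all_algebra.
From mathcomp Require Import all_classical all_reals all_analysis.
From mathcomp Require Import ring lra.
Import Order.TTheory GRing.Theory Num.Theory.
Import numFieldNormedType.Exports.
Local Open Scope ring_scope.
Local Open Scope classical_set_scope.

(* Write the Lorentzian form as h = P^T eta P, so that h(v,w) = eta(vP^T, wP^T).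
   The argument then rests on two facts about the Minkowski form eta.
   (1) Reverse Cauchy-Schwarz: if a, b are timelike with a^0 b^0 > 0, then
       eta(a,b) > 0 and eta(a,a) eta(b,b) <= eta(a,b)^2.  This follows from
       eta(b - t a, b - t a) <= 0 for t = b^0/a^0 (a vector with vanishing
       time coordinate is spacelike or null) and a discriminant argument.
   (2) On the connected component C of {h > 0}, the time coordinate of vP^T
       never vanishes (a vector with zero time coordinate is not timelike),
       so by connectedness it has constant sign.
   Applying (1) to (v, w) and to (vP^T, wP^T) gives, with
   a = eta(w,v)/eta(v,v) and b = h(w,v)/h(v,v), the bounds
   eta(w,w) <= a^2 eta(v,v) and h(w,w) <= b^2 h(v,v); hence
   F(w)^4 <= (ab)^2 F(v)^4 <= ((a+b)/2)^4 F(v)^4 by AM-GM, which is the claim. *)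

Lemma reverse_discriminant {R : realFieldType} (ea eb x t : R) :
  0 < ea -> 0 < eb -> 0 < t -> eb - 2 * t * x + t ^+ 2 * ea <= 0 ->
  0 < x /\ ea * eb <= x ^+ 2.
Proof.
move=> ea_gt0 eb_gt0 t_gt0 quad_le0.
have tx_gt0 : 0 < t * x by nra.
split; first by move: tx_gt0; rewrite pmulr_rgt0.
have amgm : 4 * t ^+ 2 * (ea * eb) <= (eb + t ^+ 2 * ea) ^+ 2.
  rewrite -subr_ge0.
  have -> : (eb + t ^+ 2 * ea) ^+ 2 - 4 * t ^+ 2 * (ea * eb) =
    (eb - t ^+ 2 * ea) ^+ 2 by ring.
  exact: sqr_ge0.
have bound : eb + t ^+ 2 * ea <= 2 * (t * x) by lra.
have : (eb + t ^+ 2 * ea) ^+ 2 <= (2 * (t * x)) ^+ 2.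
  have sum_ge0 : 0 <= eb + t ^+ 2 * ea.
    by rewrite addr_ge0 ?mulr_ge0 ?sqr_ge0 // ltW.
  by rewrite !expr2 ler_pM.
have -> : (2 * (t * x)) ^+ 2 = 4 * t ^+ 2 * x ^+ 2 by ring.
move=> sq_le; have t2_gt0 : 0 < 4 * t ^+ 2 by rewrite mulr_gt0 ?exprn_gt0.
by rewrite -(ler_pM2l t2_gt0) (le_trans amgm).
Qed.

Lemma ratio_bound {R : realFieldType} {ea eb x : R} :
  0 < ea -> ea * eb <= x ^+ 2 -> eb <= (x / ea) ^+ 2 * ea.
Proof.
move=> ea_gt0 prod_le; have ea_neq0 : ea != 0 by rewrite gt_eqF.
have -> : (x / ea) ^+ 2 * ea = x ^+ 2 / ea by field.
by rewrite ler_pdivlMr // mulrC.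
Qed.

Lemma amgm_fourth {R : realFieldType} (a b : R) :
  0 <= a -> 0 <= b -> (a * b) ^+ 2 <= ((a + b) / 2) ^+ 4.
Proof.
move=> a_ge0 b_ge0.
have amgm : a * b <= ((a + b) / 2) ^+ 2 by have := sqr_ge0 (a - b); nra.
have -> : ((a + b) / 2) ^+ 4 = (((a + b) / 2) ^+ 2) ^+ 2 by rewrite -exprM.
have ab_ge0 : 0 <= a * b by rewrite mulr_ge0.
by rewrite (expr2 (a * b)) (expr2 (_ ^+ 2)) ler_pM.
Qed.

Lemma powR_quarter_le {R : realType} (x y z : R) :
  0 <= x -> 0 <= y -> 0 <= z -> x <= y ^+ 4 * z ->
  x `^ 4%:R^-1 <= y * z `^ 4%:R^-1.
Proof.
move=> x_ge0 y_ge0 z_ge0 le_x.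
have y4_ge0 : 0 <= y ^+ 4 by rewrite exprn_ge0.
have root_y4 : (y ^+ 4) `^ 4%:R^-1 = y.
  by rewrite -powR_mulrn // -powRrM mulfV ?powRr1 ?pnatr_eq0.
rewrite -{1}root_y4 -powRM //.
by apply: ge0_ler_powR; rewrite ?nnegrE ?mulr_ge0.
Qed.

Lemma quartic_ratio_le {R : realType} {ev ew hv hw a b : R} :
  0 < ev -> 0 < hv -> 0 <= ew -> 0 <= hw -> 0 <= a -> 0 <= b ->
  ew <= a ^+ 2 * ev -> hw <= b ^+ 2 * hv ->
  (ew * hw) `^ 4%:R^-1 / (ev * hv) `^ 4%:R^-1 <= (a + b) / 2.
Proof.
move=> ev_gt0 hv_gt0 ew_ge0 hw_ge0 a_ge0 b_ge0 le_ew le_hw.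
have evhv_gt0 : 0 < ev * hv by rewrite mulr_gt0.
have prod_le : ew * hw <= ((a + b) / 2) ^+ 4 * (ev * hv).
  apply: (le_trans (ler_pM ew_ge0 hw_ge0 le_ew le_hw)).
  have -> : a ^+ 2 * ev * (b ^+ 2 * hv) = (a * b) ^+ 2 * (ev * hv) by ring.
  by apply: ler_wpM2r; [exact: ltW | exact: amgm_fourth].
rewrite ler_pdivrMr ?powR_gt0 //.
apply: powR_quarter_le prod_le; last exact: ltW.
  by rewrite mulr_ge0.
by rewrite divr_ge0 ?addr_ge0.
Qed.

Section Minkowski.
Context {R : realType} {n : nat}.
Implicit Types (a b u v w : 'rV[R]_n.+1) (P : 'M[R]_n.+1).

Lemma etaE v w :
  etaL v w = v 0 0 * w 0 0 - \sum_(i < n) v 0 (lift ord0 i) * w 0 (lift ord0 i).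
Proof.
rewrite /etaL /bform /etaM mul_mx_diag !mxE big_ord_recl !mxE eqxx /= mulr1.
rewrite -sumrN; congr (_ + _); apply: eq_bigr => i _; rewrite !mxE.
by rewrite (_ : (lift ord0 i == ord0) = false) //= mulrN1 mulNr.
Qed.

Lemma etaC v w : etaL v w = etaL w v.
Proof. rewrite !etaE mulrC; congr (_ - _); apply: eq_bigr => i _; exact: mulrC. Qed.

Lemma eta_line a b (t : R) :
  etaL (b - t *: a) (b - t *: a) =
  etaL b b - 2 * t * etaL a b + t ^+ 2 * etaL a a.
Proof.
have etaZl (u : 'rV[R]_n.+1) s z : etaL (s *: u) z = s * etaL u z.
  by rewrite /etaL /bform -!scalemxAl mxE.
have etaDl (u u' z : 'rV[R]_n.+1) : etaL (u + u') z = etaL u z + etaL u' z.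
  by rewrite /etaL /bform !mulmxDl mxE.
have etaNl (u z : 'rV[R]_n.+1) : etaL (- u) z = - etaL u z.
  by rewrite -scaleN1r etaZl mulN1r.
rewrite etaDl etaNl etaZl (etaC b) (etaC a) !etaDl !etaNl !etaZl (etaC b a).
ring.
Qed.

Lemma eta_space_le0 u :
  u 0 0 = 0 -> etaL u u <= 0.
Proof.
rewrite etaE => ->; rewrite mul0r sub0r oppr_le0.
by apply: sumr_ge0 => i _; rewrite -expr2 sqr_ge0.
Qed.

Lemma timelike_time_neq0 u :
  0 < etaL u u -> u 0 0 != 0.
Proof. by move=> u_tl; apply/eqP => /eta_space_le0; rewrite leNgt u_tl. Qed.

Lemma eta_reverse_CS a b :
  0 < etaL a a -> 0 < etaL b b -> 0 < a 0 0 * b 0 0 ->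
  0 < etaL a b /\ etaL a a * etaL b b <= etaL a b ^+ 2.
Proof.
move=> a_tl b_tl same_cone.
have a0_neq0 := timelike_time_neq0 a a_tl.
pose t := b 0 0 / a 0 0.
have t_gt0 : 0 < t.
  have -> : t = a 0 0 * b 0 0 / a 0 0 ^+ 2 by rewrite /t; field.
  by rewrite divr_gt0 // exprn_even_gt0.
have time0 : (b - t *: a) 0 0 = 0 by rewrite !mxE /t divfK ?subrr.
apply: (@reverse_discriminant _ _ _ _ t) => //.
by rewrite -eta_line eta_space_le0.
Qed.

Lemma bform_congr_eta P v w :
  bform (P^T *m etaM R n *m P) v w = etaL (v *m P^T) (w *m P^T).
Proof. by rewrite /etaL /bform trmx_mul trmxK !mulmxA. Qed.

End Minkowski.

Lemma connected_const_sign {R : realType} {T : topologicalType} (A : set T)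
    (f : T -> R) :
  connected A -> {within A, continuous f} -> (forall x, A x -> f x != 0) ->
  forall x y, A x -> A y -> 0 < f x * f y.
Proof.
move=> A_conn f_cont f_neq0 x y Ax Ay.
have fA_itv : is_interval (f @` A).
  exact/connected_intervalP/connected_continuous_connected.
rewrite ltNge; apply/negP => fxy_le0.
have fx_neq0 := f_neq0 x Ax; have fy_neq0 := f_neq0 y Ay.
suff [u Au fu0] : (f @` A) 0 by move: (f_neq0 u Au); rewrite fu0 eqxx.
have [lt|gt|eq] := ltgtP (f x) (f y).
- by apply: (fA_itv (f x) (f y)); [exists x|exists y|apply/andP; split; nra].
- by apply: (fA_itv (f y) (f x)); [exists y|exists x|apply/andP; split; nra].
- by move: fxy_le0; rewrite eq -expr2 leNgt lt_def sqrf_eq0 fy_neq0 sqr_ge0.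
Qed.

Lemma mulmx_coord_continuous {R : realType} {n : nat} (M : 'M[R]_n.+1) :
  continuous (fun u : 'rV[R]_n.+1 => (u *m M) 0 0).
Proof.
have -> : (fun u : 'rV[R]_n.+1 => (u *m M) 0 0) =
    (fun u => \sum_(j <- index_enum 'I_n.+1 | true)
                (fun j (u : 'rV[R]_n.+1) => u 0 j * M j 0) j u).
  by apply: funext => u; rewrite mxE.
apply: continuous_big; first exact: add_continuous.
move=> j _ x /=.
exact: (continuousM (@coord_continuous R 1 n.+1 0 j x) (@cst_continuous _ _ (M j 0) x)).
Qed.

Lemma component_same_cone {R : realType} {n : nat} {P : 'M[R]_n.+1}
    {x0 v w : 'rV[R]_n.+1} :
  let C := @connected_component ('rV[R]_n.+1 : topologicalType)
             [set u | 0 < bform (P^T *m etaM R n *m P) u u] x0 in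
  C v -> C w -> 0 < (v *m P^T) 0 0 * (w *m P^T) 0 0.
Proof.
move=> C Cv Cw.
apply: (connected_const_sign C (fun u : 'rV[R]_n.+1 => (u *m P^T) 0 0)) => //.
- exact: component_connected.
- exact/continuous_subspaceT/mulmx_coord_continuous.
- move=> u /connected_component_sub.
  by rewrite /= bform_congr_eta => /timelike_time_neq0.
Qed.

Theorem mainTheorem9 (R : realType) (n : nat) (H : 'M[R]_n.+1)
  (x0 : 'rV[R]_n.+1) :
  lorentzian H ->
  0 < bform H x0 x0 ->
  let C := @connected_component ('rV[R]_n.+1 : topologicalType) [set v | 0 < bform H v v] x0 in
  Tset C !=set0 ->
  forall v w, Tset C v -> Tset C w ->
    (etaL w v / etaL v v + bform H w v / bform H v v) / 2
      >= Ffun H w / Ffun H v.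
Proof.
move=> [_ [P [_ ->]]] _ C _ v w [[ev v0] Cv] [[ew w0] Cw].
have hv := connected_component_sub Cv; have hw := connected_component_sub Cw.
move: hv hw; rewrite /Ffun /= !bform_congr_eta (etaC w) (etaC (w *m P^T)).
move=> hv hw.
have [eta_vw eta_CS] := eta_reverse_CS v w ev ew (mulr_gt0 v0 w0).
have [h_vw h_CS] := eta_reverse_CS _ _ hv hw (component_same_cone Cv Cw).
exact: (quartic_ratio_le ev hv (ltW ew) (ltW hw)
  (divr_ge0 (ltW eta_vw) (ltW ev)) (divr_ge0 (ltW h_vw) (ltW hv))
  (ratio_bound ev eta_CS) (ratio_bound hv h_CS)).
Qed.
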